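(* Let $X=(\mathbb{R}^n,\|\cdot\|)$ be a real Banach space with an absolute norm and let $\tilde X=(\mathbb{C}^n,\|\cdot\|_{\mathbb{C}})$ be its complexification, $\|(z_1,\dots,z_n)\|_{\mathbb{C}}=\|(|z_1|,\dots,|z_n|)\|$. Then for $x\in X$, $x$ is an extreme point of $B_X$ if and only if $x$ is an extreme point of $B_{\tilde X}$. Moreover, $X$ is a CL-space if and only if $\tilde X$ is a CL-space.
   Context: A norm on $\mathbb{R}^n$ or $\mathbb{C}^n$ is absolute if $\|(a_1,\dots,a_n)\|=\|(|a_1|,\dots,|a_n|)\|$ for all scalars $a_j$ and $\|e_1\|=\dots=\|e_n\|=1$ for the canonical basis $\{e_j\}$. A point $x\in B_Z$ is an extreme point if $y+z=2x$ with $y,z\in B_Z$ implies $x=y=z$. A real or complex Banach space is a CL-space if its unit ball is the absolutely convex hull of every maximal convex subset of its unit sphere; for finite-dimensional spaces this is equivalent to $|x^*(x)|=1$ for every extreme point $x^*$ of $B_{X^*}$ and every extreme point $x$ of $B_X$. *)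

From mathcomp Require Import ssreflect ssrfun ssrbool eqtype ssrnat fintype.
From Stdlib Require Import Reals List.
Set Implicit Arguments.
Unset Strict Implicit.
Unset Printing Implicit Defensive.
Open Scope R_scope.

Definition rvec (n : nat) := 'I_n -> R.
Definition rvadd n (x y : rvec n) : rvec n := fun i => x i + y i.
Definition rvscale n (c : R) (x : rvec n) : rvec n := fun i => c * x i.
Definition rvabs n (x : rvec n) : rvec n := fun i => Rabs (x i).
Definition rvunit n (j : 'I_n) : rvec n := fun i => if i == j then 1 else 0.
Definition rvzero n : rvec n := fun _ => 0.

Definition is_norm n (N : rvec n -> R) : Prop :=
  (forall x, 0 <= N x) /\
  (forall x, N x = 0 -> forall i, x i = 0) /\
  (forall c x, N (rvscale c x) = Rabs c * N x) /\
  (forall x y, N (rvadd x y) <= N x + N y).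

Definition is_absolute_norm n (N : rvec n -> R) : Prop :=
  is_norm N /\
  (forall x, N x = N (rvabs x)) /\
  (forall j : 'I_n, N (rvunit j) = 1).

Definition cplx := (R * R)%type.
Definition cadd (z w : cplx) : cplx := (fst z + fst w, snd z + snd w).
Definition cmul (z w : cplx) : cplx :=
  (fst z * fst w - snd z * snd w, fst z * snd w + snd z * fst w).
Definition cabs (z : cplx) : R := sqrt (fst z * fst z + snd z * snd z).
Definition cofR (t : R) : cplx := (t, 0).
Definition c0 : cplx := (0, 0).

Definition cvec (n : nat) := 'I_n -> cplx.
Definition cvadd n (x y : cvec n) : cvec n := fun i => cadd (x i) (y i).
Definition cvscale n (c : cplx) (x : cvec n) : cvec n := fun i => cmul c (x i).

Definition cnorm n (N : rvec n -> R) (z : cvec n) : R := N (fun i => cabs (z i)).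

Definition embed n (x : rvec n) : cvec n := fun i => cofR (x i).

Definition is_extreme_R n (N : rvec n -> R) (x : rvec n) : Prop :=
  N x <= 1 /\
  forall y z : rvec n, N y <= 1 -> N z <= 1 ->
    (forall i, y i + z i = 2 * x i) -> forall i, x i = y i /\ x i = z i.

Definition is_extreme_C n (NC : cvec n -> R) (x : cvec n) : Prop :=
  NC x <= 1 /\
  forall y z : cvec n, NC y <= 1 -> NC z <= 1 ->
    (forall i, cadd (y i) (z i) = cmul (cofR 2) (x i)) ->
    forall i, x i = y i /\ x i = z i.

Definition convex_R n (F : rvec n -> Prop) : Prop :=
  forall x y t, F x -> F y -> 0 <= t <= 1 ->
    F (rvadd (rvscale t x) (rvscale (1 - t) y)).

Definition max_convex_in_sphere_R n (N : rvec n -> R) (F : rvec n -> Prop) : Prop :=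
  (forall x, F x -> N x = 1) /\ convex_R F /\
  forall G : rvec n -> Prop, (forall x, G x -> N x = 1) -> convex_R G ->
    (forall x, F x -> G x) -> forall x, G x -> F x.

Definition rlincomb n (l : list (R * rvec n)) : rvec n :=
  fold_right (fun p acc => rvadd (rvscale (fst p) (snd p)) acc) (@rvzero n) l.

Definition aco_R n (F : rvec n -> Prop) (x : rvec n) : Prop :=
  exists l : list (R * rvec n),
    (forall p, In p l -> F (snd p)) /\
    fold_right (fun p s => Rabs (fst p) + s) 0 l <= 1 /\
    forall i, x i = rlincomb l i.

Definition is_CL_R n (N : rvec n -> R) : Prop :=
  forall F, max_convex_in_sphere_R N F -> forall x, N x <= 1 <-> aco_R F x.

Definition convex_C n (F : cvec n -> Prop) : Prop :=
  forall x y t, F x -> F y -> 0 <= t <= 1 ->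
    F (cvadd (cvscale (cofR t) x) (cvscale (cofR (1 - t)) y)).

Definition max_convex_in_sphere_C n (NC : cvec n -> R) (F : cvec n -> Prop) : Prop :=
  (forall x, F x -> NC x = 1) /\ convex_C F /\
  forall G : cvec n -> Prop, (forall x, G x -> NC x = 1) -> convex_C G ->
    (forall x, F x -> G x) -> forall x, G x -> F x.

Definition clincomb n (l : list (cplx * cvec n)) : cvec n :=
  fold_right (fun p acc => cvadd (cvscale (fst p) (snd p)) acc)
             (fun _ => c0) l.

Definition aco_C n (F : cvec n -> Prop) (x : cvec n) : Prop :=
  exists l : list (cplx * cvec n),
    (forall p, In p l -> F (snd p)) /\
    fold_right (fun p s => cabs (fst p) + s) 0 l <= 1 /\
    forall i, x i = clincomb l i.

Definition is_CL_C n (NC : cvec n -> R) : Prop :=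
  forall F, max_convex_in_sphere_C NC F -> forall x, NC x <= 1 <-> aco_C F x.

From HB Require Import structures.
From mathcomp Require Import ssreflect ssrfun ssrbool eqtype ssrnat seq fintype bigop.
From Stdlib Require Import Reals List Lra Psatz FunctionalExtensionality Classical.
Set Implicit Arguments.
Unset Strict Implicit.
Open Scope R_scope.

(* Let N be an absolute norm on R^n and N_C z = N (|z_1|, ..., |z_n|) its
   complexification.  Besides the norm axioms we only use that N is monotone
   in the moduli of the coordinates ([N_mono]).

   If x is extreme in B_X, no vector of B_X dominates x
   coordinatewise in modulus except with equal moduli ([extreme_abs_rigid]).
   For a complex midpoint decomposition of x the real parts decompose x, so
   they equal x, and then rigidity kills the imaginary parts.

   A finite-dimensional Hahn-Banach theorem shows that every
   convex subset of a unit sphere lies in an exposed face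
   {x | N x = 1, <a, x> = 1} with a dominated by the norm; hence the maximal
   convex subsets of the sphere are exactly the maximal exposed faces.  The
   complex case is reduced to the real one by viewing C^n as R^(n x 2).
   - X_C is CL => X is CL: after a change of signs the real face is given by
     some a >= 0, and {z | <a, Re z> = 1} is then a maximal face of X_C;
     real parts of a representation in X_C, each complex coefficient being
     split in two real ones, give a representation in X.
   - X is CL => X_C is CL: a complex face given by g yields the maximal real
     face given by |g|.  Using the CL property for the faces obtained by
     flipping one sign, every point of B_X is an absolutely convex
     combination of face points that meet |g| in a single coordinate; these
     can be rotated coordinatewise into the complex face, which represents
     z = phase(z) |z|. *)

Lemma funext_R (I : Type) (x y : I -> R) : (forall i, x i = y i) -> x = y.
Proof. exact: functional_extensionality. Qed.

Definition upd (I : eqType) (v : I -> R) (j : I) (c : R) : I -> R :=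
  fun i => if i == j then c else v i.

Section AbsoluteNorm.
Variable n : nat.
Variable N : rvec n -> R.
Hypothesis HN : is_absolute_norm N.

Lemma N_scale c x : N (rvscale c x) = Rabs c * N x.
Proof. by case: HN => [[_ [_ [H _]]] _]. Qed.

Lemma N_tri x y : N (rvadd x y) <= N x + N y.
Proof. by case: HN => [[_ [_ [_ H]]] _]. Qed.

Lemma N_abs x : N x = N (rvabs x).
Proof. by case: HN => [_ [H _]]. Qed.

Lemma N_ext x y : (forall i, x i = y i) -> N x = N y.
Proof. by move=> /funext_R ->. Qed.

Lemma N_zero : N (@rvzero n) = 0.
Proof.
have -> : @rvzero n = rvscale 0 (@rvzero n) by apply: funext_R => i; rewrite /rvscale /rvzero; ring.
by rewrite N_scale Rabs_R0 Rmult_0_l.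
Qed.

Lemma N_absext x y : (forall i, Rabs (x i) = Rabs (y i)) -> N x = N y.
Proof. move=> H; rewrite (N_abs x) (N_abs y); exact: N_ext. Qed.

Lemma N_opp x : N (fun i => - x i) = N x.
Proof. apply: N_absext => i; exact: Rabs_Ropp. Qed.

(* Shrinking one coordinate does not increase the norm: upd v j c is a convex
   combination of v and of v with its j-th coordinate negated. *)
Lemma N_upd_mono v j c : Rabs c <= Rabs (v j) -> N (upd v j c) <= N v.
Proof.
move=> Hc.
have Hflip : N (upd v j (- v j)) = N v.
  apply: N_absext => i; rewrite /upd; case: eqP => [->|_] //; exact: Rabs_Ropp.
have [Hvj|Hvj] := Req_dec (v j) 0.
  have -> : upd v j c = v.
    apply: funext_R => i; rewrite /upd; case: eqP => [->|_] //.
    move: Hc; rewrite Hvj Rabs_R0; split_Rabs; lra.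
  exact: Rle_refl.
set t := (1 + c / v j) / 2.
have Ht : 0 <= t <= 1.
  have : Rabs (c / v j) <= 1.
    apply: (Rmult_le_reg_r (Rabs (v j))); first exact: Rabs_pos_lt.
    by rewrite -Rabs_mult /Rdiv Rmult_assoc Rinv_l // Rmult_1_r Rmult_1_l.
  rewrite /t; split_Rabs; lra.
have -> : upd v j c = rvadd (rvscale t v) (rvscale (1 - t) (upd v j (- v j))).
  apply: funext_R => i; rewrite /upd /rvadd /rvscale; case: eqP => [->|_]; last ring.
  by rewrite /t; field.
apply: Rle_trans (N_tri _ _) _.
rewrite !N_scale Hflip !Rabs_pos_eq; lra.
Qed.

(* Absolute norms are monotone: |x_i| <= |y_i| for all i implies N x <= N y.
   Replace the coordinates of y by those of x one at a time. *)
Lemma N_mono x y : (forall i, Rabs (x i) <= Rabs (y i)) -> N x <= N y.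
Proof.
move=> Hxy.
pose mix (L : list 'I_n) : rvec n := fun i => if i \in L then x i else y i.
have Hmix : forall L, N (mix L) <= N y.
  elim=> [|j L IH].
    apply: Req_le; apply: N_ext => i; by rewrite /mix seq.in_nil.
  apply: Rle_trans IH.
  have -> : mix (j :: L) = upd (mix L) j (x j).
    apply: funext_R => i; rewrite /mix /upd seq.in_cons; by case: eqP => [->|].
  apply: N_upd_mono; rewrite /mix; case: (j \in L); [exact: Rle_refl | exact: Hxy].
have -> : x = mix (enum 'I_n) by apply: funext_R => i; rewrite /mix mem_enum.
exact: Hmix.
Qed.

End AbsoluteNorm.

(* Complex numbers are pairs (Re, Im).  [cinner g z] = Re (conj g * z) is the
   real inner product of C = R^2; complex faces are described with it. *)
Definition cinner (g z : cplx) : R := fst g * fst z + snd g * snd z.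
Definition cconj (z : cplx) : cplx := (fst z, - snd z).

Lemma cpair_eq (z w : cplx) : fst z = fst w -> snd z = snd w -> z = w.
Proof. by case: z; case: w => /= ? ? ? ? -> ->. Qed.

Lemma cabs_ge0 z : 0 <= cabs z.
Proof. exact: sqrt_pos. Qed.

Lemma cabs_abs z : Rabs (cabs z) = cabs z.
Proof. exact/Rabs_pos_eq/cabs_ge0. Qed.

Lemma cabs_sq z : cabs z * cabs z = fst z * fst z + snd z * snd z.
Proof. by rewrite /cabs sqrt_sqrt //; nra. Qed.

Lemma cabs_cofR t : cabs (cofR t) = Rabs t.
Proof. by rewrite /cabs /cofR /= Rmult_0_l Rplus_0_r sqrt_Rsqr_abs. Qed.

Lemma cabs_c0 : cabs c0 = 0.
Proof. by rewrite /cabs /c0 /= Rmult_0_l Rplus_0_l sqrt_0. Qed.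

Lemma cabs0 z : cabs z = 0 -> z = c0.
Proof. move=> H; have := cabs_sq z; rewrite H Rmult_0_l => ?; apply: cpair_eq => /=; nra. Qed.

Lemma le_of_sq_le a b : 0 <= b -> a * a <= b * b -> a <= b.
Proof. move=> *; nra. Qed.

Lemma Re_le_cabs z : Rabs (fst z) <= cabs z.
Proof. apply: le_of_sq_le; [exact: cabs_ge0 | rewrite cabs_sq -Rabs_mult Rabs_pos_eq; nra]. Qed.

Lemma cabs_eq_Re z : cabs z = Rabs (fst z) -> snd z = 0.
Proof.
move=> H; have : cabs z * cabs z = Rabs (fst z) * Rabs (fst z) by rewrite H.
rewrite cabs_sq -Rabs_mult Rabs_pos_eq; nra.
Qed.

Lemma cabs_mul u v : cabs (cmul u v) = cabs u * cabs v.
Proof. by rewrite /cabs -sqrt_mult; try nra; congr sqrt; rewrite /cmul /=; ring. Qed.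

Lemma cabs_conj u : cabs (cconj u) = cabs u.
Proof. by rewrite /cabs /cconj /=; congr sqrt; ring. Qed.

Lemma cinner_le g z : cinner g z <= cabs g * cabs z.
Proof.
apply: le_of_sq_le; first by apply: Rmult_le_pos; exact: cabs_ge0.
have -> : cabs g * cabs z * (cabs g * cabs z) = (cabs g * cabs g) * (cabs z * cabs z) by ring.
rewrite !cabs_sq /cinner.
have := Rle_0_sqr (fst g * snd z - snd g * fst z); rewrite /Rsqr; nra.
Qed.

Lemma cinner_abs_le g z : Rabs (cinner g z) <= cabs g * cabs z.
Proof.
have H := cinner_le g (- fst z, - snd z).
have Hneg : cabs (- fst z, - snd z) = cabs z by rewrite /cabs /=; congr sqrt; ring.
move: H (cinner_le g z); rewrite Hneg /cinner /=; split_Rabs; lra.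
Qed.

Lemma cabs_add u v : cabs (cadd u v) <= cabs u + cabs v.
Proof.
apply: le_of_sq_le; first by have := cabs_ge0 u; have := cabs_ge0 v; lra.
have := cinner_le u v; rewrite cabs_sq /cadd /cinner /=.
have := cabs_sq u; have := cabs_sq v; nra.
Qed.

Definition phase (g : cplx) : cplx :=
  if Req_EM_T (cabs g) 0 then (1, 0) else (fst g / cabs g, snd g / cabs g).

Lemma phase_sq g : fst (phase g) * fst (phase g) + snd (phase g) * snd (phase g) = 1.
Proof.
rewrite /phase; case: Req_EM_T => h /=; first ring.
have := cabs_sq g; have := cabs_ge0 g => ? Hsq.
transitivity ((fst g * fst g + snd g * snd g) / (cabs g * cabs g)); first by field.
by rewrite -Hsq; field.
Qed.

Lemma cabs_phase g : cabs (phase g) = 1.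
Proof. by rewrite /cabs phase_sq sqrt_1. Qed.

Lemma cabs_phase_mul g r : cabs (cmul (phase g) (cofR r)) = Rabs r.
Proof. by rewrite cabs_mul cabs_phase cabs_cofR Rmult_1_l. Qed.

Lemma phase_decomp g : g = cmul (phase g) (cofR (cabs g)).
Proof.
rewrite /phase; case: Req_EM_T => h /=.
  by rewrite h (cabs0 h); apply: cpair_eq; rewrite /cmul /cofR /c0 /=; ring.
by apply: cpair_eq; rewrite /cmul /cofR /=; field.
Qed.

Lemma cinner_phase g w : cinner g (cmul (phase g) w) = cabs g * fst w.
Proof.
rewrite {1}(phase_decomp g) /cinner /cmul /cofR /=.
transitivity (cabs g * fst w * (fst (phase g) * fst (phase g) + snd (phase g) * snd (phase g))); first ring.
by rewrite phase_sq; ring.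
Qed.

Lemma cinner_unit u w : cabs u = 1 -> cinner u (cmul u w) = fst w.
Proof.
move=> H; have := cabs_sq u; rewrite H /cinner /cmul /= => Hsq.
transitivity (fst w * (fst u * fst u + snd u * snd u)); first ring.
by rewrite -Hsq; ring.
Qed.

Lemma cinner_scale u b z : cinner (cmul u (cofR b)) z = b * cinner u z.
Proof. rewrite /cinner /cmul /cofR /=; ring. Qed.

Lemma cconj_unit u : cabs u = 1 -> cmul (cconj u) u = (1, 0).
Proof. move=> H; have := cabs_sq u; rewrite H => ?; apply: cpair_eq; rewrite /cmul /cconj /=; lra. Qed.

Lemma cmul1 u : cmul (1, 0) u = u.
Proof. apply: cpair_eq; rewrite /cmul /=; ring. Qed.

Lemma cinner_eq g z : cinner g z = cabs g * cabs z -> cabs g <> 0 ->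
  z = cmul (phase g) (cofR (cabs z)).
Proof.
move=> H hg.
have hz := cabs_sq z; have hgg := cabs_sq g.
have cross : fst g * snd z = snd g * fst z.
  have : cinner g z * cinner g z = (cabs g * cabs g) * (cabs z * cabs z) by rewrite H; ring.
  rewrite hz hgg /cinner; nra.
have Hre : cabs g * (cabs g * fst z) = cabs g * (fst g * cabs z).
  rewrite -Rmult_assoc hgg.
  have -> : cabs g * (fst g * cabs z) = fst g * (cabs g * cabs z) by ring.
  rewrite -H /cinner.
  transitivity (fst g * (fst g * fst z) + snd g * (snd g * fst z)); first ring.
  by rewrite -cross; ring.
have Him : cabs g * (cabs g * snd z) = cabs g * (snd g * cabs z).
  rewrite -Rmult_assoc hgg.
  have -> : cabs g * (snd g * cabs z) = snd g * (cabs g * cabs z) by ring.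
  rewrite -H /cinner.
  transitivity (fst g * (fst g * snd z) + snd g * (snd g * snd z)); first ring.
  by rewrite cross; ring.
have Hre' := Rmult_eq_reg_l _ _ _ Hre hg.
have Him' := Rmult_eq_reg_l _ _ _ Him hg.
rewrite /phase; case: Req_EM_T => [/hg []|_] /=.
apply: cpair_eq; rewrite /cmul /cofR /=; apply: (Rmult_eq_reg_l (cabs g)) => //; field_simplify => //; lra.
Qed.

Section ExtremePoints.
Variable n : nat.
Variable N : rvec n -> R.
Hypothesis HN : is_absolute_norm N.

Lemma cnorm_embed x : cnorm N (embed x) = N x.
Proof. by rewrite /cnorm (N_abs HN x); apply: N_ext => i; rewrite /embed cabs_cofR. Qed.

Lemma N_Re_le (z : cvec n) : N (fun i => fst (z i)) <= cnorm N z.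
Proof. apply: (N_mono HN) => i; rewrite cabs_abs; exact: Re_le_cabs. Qed.

(* An extreme point x of B_X is rigid: a vector of B_X whose coordinates
   dominate those of x in modulus has the same moduli.  Otherwise x_j is the
   midpoint of (sign x_j) |u_j| and 2 x_j - (sign x_j) |u_j| in coordinate j. *)
Lemma extreme_abs_rigid x u : is_extreme_R N x -> N u <= 1 ->
  (forall i, Rabs (x i) <= Rabs (u i)) -> forall i, Rabs (u i) = Rabs (x i).
Proof.
move=> [_ Hx] Hu Hxu j.
pose s := if Rle_dec 0 (x j) then Rabs (u j) else - Rabs (u j).
have Hball : forall c, Rabs c <= Rabs (u j) -> N (upd x j c) <= 1.
  move=> c Hc; apply: Rle_trans Hu; apply: (N_mono HN) => i.
  by rewrite /upd; case: eqP => [->|_].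
have Hs : Rabs s <= Rabs (u j).
  by rewrite /s; case: (Rle_dec 0 (x j)) => ?; rewrite ?Rabs_Ropp Rabs_Rabsolu; lra.
have Hs' : Rabs (2 * x j - s) <= Rabs (u j).
  move: (Hxu j) (Rabs_pos (u j)); rewrite /s; set r := Rabs (u j).
  by case: (Rle_dec 0 (x j)) => ? ? ? /=; split_Rabs; lra.
have Hmid : forall i, upd x j s i + upd x j (2 * x j - s) i = 2 * x i.
  by move=> i; rewrite /upd; case: eqP => [->|_]; ring.
have [Hxs _] := Hx _ _ (Hball _ Hs) (Hball _ Hs') Hmid j.
move: Hxs; rewrite /upd eqxx /s.
by case: (Rle_dec 0 (x j)) => _ /= ->; rewrite ?Rabs_Ropp Rabs_Rabsolu.
Qed.

Lemma extreme_real_part x w : is_extreme_R N x -> cnorm N w <= 1 ->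
  (forall i, fst (w i) = x i) -> forall i, w i = embed x i.
Proof.
move=> Hx Hw HRe i.
have Hrigid := extreme_abs_rigid (u := fun i => cabs (w i)) Hx Hw.
have Him : snd (w i) = 0.
  apply: cabs_eq_Re; rewrite -cabs_abs HRe; apply: Hrigid => k.
  by rewrite -HRe cabs_abs; exact: Re_le_cabs.
by apply: cpair_eq; rewrite /embed /cofR /= ?HRe ?Him.
Qed.

Lemma extreme_complexification x :
  is_extreme_R N x <-> is_extreme_C (cnorm N) (embed x).
Proof.
split.
- move=> Hx; have [Hx1 Hx2] := Hx; split; first by rewrite cnorm_embed.
  move=> y z Hy Hz Hmid.
  have HRe : forall i, fst (y i) + fst (z i) = 2 * x i.
    by move=> i; move: (Hmid i); rewrite /cadd /cmul /cofR /=; case=> ? _; lra.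
  have Hyz := Hx2 _ _ (Rle_trans _ _ _ (N_Re_le y) Hy) (Rle_trans _ _ _ (N_Re_le z) Hz) HRe.
  move=> i; split; symmetry; apply: extreme_real_part => // k; by case: (Hyz k).
- move=> [Hx1 Hx2]; split; first by rewrite -cnorm_embed.
  move=> y z Hy Hz Hmid i.
  have Hmid' : forall i, cadd (embed y i) (embed z i) = cmul (cofR 2) (embed x i).
    by move=> k; rewrite /cadd /cmul /embed /cofR /= -Hmid; congr pair; ring.
  rewrite -cnorm_embed in Hy; rewrite -cnorm_embed in Hz.
  have [Hy' Hz'] := Hx2 _ _ Hy Hz Hmid' i.
  by move: Hy' Hz'; rewrite /embed /cofR; case=> -> [] ->.
Qed.

End ExtremePoints.

HB.instance Definition _ := Monoid.isComLaw.Build R 0 Rplus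
  (fun a b c => esym (Rplus_assoc a b c)) Rplus_comm Rplus_0_l.

Definition dot (I : finType) (a x : I -> R) : R := \big[Rplus/0]_(i : I) (a i * x i).

Section FiniteSums.
Variable I : finType.
Implicit Types F G a x y : I -> R.

Lemma sum_le F G : (forall i, F i <= G i) ->
  \big[Rplus/0]_(i : I) F i <= \big[Rplus/0]_(i : I) G i.
Proof. by move=> H; apply: (big_ind2 (fun r s => r <= s)); [lra | move=> *; lra | move=> i _]. Qed.

Lemma sum_D1 j F :
  \big[Rplus/0]_(i : I) F i = F j + \big[Rplus/0]_(i : I | i != j) F i.
Proof. by rewrite (bigD1 j). Qed.

Lemma sum_le_eq F G : (forall i, F i <= G i) ->
  \big[Rplus/0]_(i : I) F i = \big[Rplus/0]_(i : I) G i -> forall i, F i = G i.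
Proof.
move=> H Heq j; apply: Rle_antisym; first exact: H.
move: Heq; rewrite (sum_D1 j F) (sum_D1 j G).
have : \big[Rplus/0]_(i : I | i != j) F i <= \big[Rplus/0]_(i : I | i != j) G i.
  rewrite big_mkcond [X in _ <= X]big_mkcond; apply: sum_le => i.
  by case: (i != j); [exact: H | exact: Rle_refl].
lra.
Qed.

Lemma sum_scale c F : \big[Rplus/0]_(i : I) (c * F i) = c * \big[Rplus/0]_(i : I) F i.
Proof. by elim/big_rec2: _ => [|i y1 y2 _ ->]; ring. Qed.

Lemma sum_add F G : \big[Rplus/0]_(i : I) (F i + G i) =
  \big[Rplus/0]_(i : I) F i + \big[Rplus/0]_(i : I) G i.
Proof. exact: big_split. Qed.

Lemma dot_add a x y : dot a (fun i => x i + y i) = dot a x + dot a y.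
Proof. by rewrite /dot -sum_add; apply: eq_bigr => i _; ring. Qed.

Lemma dot_scale a x t : dot a (fun i => t * x i) = t * dot a x.
Proof. by rewrite /dot -sum_scale; apply: eq_bigr => i _; ring. Qed.

Lemma dot_zero a : dot a (fun _ => 0) = 0.
Proof. by rewrite /dot big1 // => i _; ring. Qed.

Lemma dot_comm a x : dot a x = dot x a.
Proof. by apply: eq_bigr => i _; ring. Qed.

Lemma dot_upd a x j c : dot (upd a j c) x = dot a x + (c - a j) * x j.
Proof.
rewrite /dot (sum_D1 j) [X in _ = X + _](sum_D1 j) /upd eqxx.
rewrite (eq_bigr (fun i => a i * x i)); first ring.
by move=> i /negbTE ->.
Qed.

Lemma dot_upd_r a x j c : dot a (upd x j c) = dot a x + a j * (c - x j).
Proof. by rewrite dot_comm dot_upd dot_comm; ring. Qed.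

End FiniteSums.

Lemma In_mem (T : eqType) (x : T) (s : list T) : x \in s -> In x s.
Proof. by elim: s => [|y s IH] //=; rewrite seq.in_cons => /orP [/eqP ->|/IH]; [left | right]. Qed.

(* Hahn-Banach in R^I: a sublinear functional q on R^I dominates a linear
   one.  The functional is built coordinate by coordinate on the subspaces
   V_L = {x | x_i = 0 for i not in L}. *)
Section HahnBanach.
Variable I : finType.
Variable q : (I -> R) -> R.
Hypothesis q_subadd : forall x y, q (fun i => x i + y i) <= q x + q y.
Hypothesis q_hom : forall t x, 0 < t -> q (fun i => t * x i) = t * q x.
Hypothesis q_zero : 0 <= q (fun _ => 0).

Definition supported (L : list I) (x : I -> R) := forall i, ~ In i L -> x i = 0.

Local Notation e j := (upd (fun _ => 0) j 1).

(* The gap in which the value of the extension on e_j has to be chosen. *)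
Lemma extension_gap L a j u u' :
  (forall x, supported L x -> dot a x <= q x) -> supported L u -> supported L u' ->
  dot a u - q (fun i => u i - e j i) <= q (fun i => u' i + e j i) - dot a u'.
Proof.
move=> Ha Hu Hu'.
have Hsum : supported L (fun i => u i + u' i) by move=> i Hi; rewrite Hu ?Hu' //; ring.
have := Ha _ Hsum; rewrite dot_add.
have := q_subadd (fun i => u i - e j i) (fun i => u' i + e j i).
have -> : (fun i => (u i - e j i) + (u' i + e j i)) = (fun i => u i + u' i) by apply: funext_R => i; ring.
lra.
Qed.

(* By completeness of R, a value alpha for the extension on e_j fits in the
   gap. *)
Lemma extension_value L j a : (forall x, supported L x -> dot a x <= q x) ->
  exists alpha, (forall u, supported L u -> dot a u - q (fun i => u i - e j i) <= alpha) /\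
                (forall u, supported L u -> alpha <= q (fun i => u i + e j i) - dot a u).
Proof.
move=> Ha.
pose Lo r := exists u, supported L u /\ r = dot a u - q (fun i => u i - e j i).
have H0 : supported L (fun _ => 0) by [].
have Hbound : bound Lo.
  exists (q (fun i => 0 + e j i) - dot a (fun _ => 0)) => r [u [Hu ->]].
  exact: (extension_gap j Ha Hu H0).
have [alpha [Hlo Hup]] := completeness Lo Hbound (ex_intro _ _ (ex_intro _ _ (conj H0 erefl))).
exists alpha; split; first by move=> u Hu; apply: Hlo; exists u.
by move=> u Hu; apply: Hup => r [u' [Hu' ->]]; exact: (extension_gap j Ha Hu' Hu).
Qed.

Lemma extension_step L j a :
  (forall x, supported L x -> dot a x <= q x) ->
  exists a', forall x, supported (j :: L) x -> dot a' x <= q x.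
Proof.
move=> Ha; have [alpha [Hlo Hhi]] := extension_value j Ha.
exists (upd a j alpha) => x Hx.
pose v := upd x j 0.
have Hv : supported L v.
  move=> i Hi; rewrite /v /upd; case: eqP => // Hij; apply: Hx => -[Hji|]; [exact: Hij | exact: Hi].
have Hxv : x = (fun i => v i + x j * e j i).
  by apply: funext_R => i; rewrite /v /upd; case: eqP => [->|_]; ring.
have -> : dot (upd a j alpha) x = dot a v + alpha * x j.
  by rewrite dot_upd {1}Hxv dot_add dot_scale dot_upd_r dot_zero; ring.
have [Hneg|[Hzero|Hpos]] := Rtotal_order (x j) 0.
- pose u i := / (- x j) * v i.
  have Hu : supported L u by move=> i Hi; rewrite /u Hv //; ring.
  have := Hlo _ Hu.
  have -> : dot a v = - x j * dot a u by rewrite /u dot_scale; field; lra.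
  have -> : q x = - x j * q (fun i => u i - e j i).
    rewrite -q_hom; last lra.
    by congr q; apply: funext_R => i; rewrite {1}Hxv /u; field; lra.
  move=> Hal; have : - x j * (dot a u - q (fun i => u i - e j i)) <= - x j * alpha.
    by apply: Rmult_le_compat_l; lra.
  lra.
- have Hvx : v = x by apply: funext_R => i; rewrite /v /upd; case: eqP => [->|].
  by rewrite Hzero Rmult_0_r Rplus_0_r -Hvx; exact: Ha.
- pose u i := / x j * v i.
  have Hu : supported L u by move=> i Hi; rewrite /u Hv //; ring.
  have := Hhi _ Hu.
  have -> : dot a v = x j * dot a u by rewrite /u dot_scale; field; lra.
  have -> : q x = x j * q (fun i => u i + e j i).
    rewrite -q_hom //.
    by congr q; apply: funext_R => i; rewrite {1}Hxv /u; field; lra.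
  move=> Hal; have : x j * alpha <= x j * (q (fun i => u i + e j i) - dot a u).
    by apply: Rmult_le_compat_l; lra.
  lra.
Qed.

Lemma hahn_banach : exists a, forall x, dot a x <= q x.
Proof.
have Hall : forall L, exists a, forall x, supported L x -> dot a x <= q x.
  elim=> [|j L [a IH]]; last exact: extension_step IH.
  exists (fun _ => 0) => x Hx.
  by rewrite (_ : x = fun _ => 0) ?dot_zero //; apply: funext_R => i; apply: Hx.
have [a Ha] := Hall (enum I); exists a => x; apply: Ha => i []; exact/In_mem/mem_enum.
Qed.

End HahnBanach.

(* It is obtained from Hahn-Banach applied to the sublinear
   gauge  q x = inf {p (x + s c) - s | s >= 0, c in C}  (the distance-like
   function of the cone generated by C), which satisfies q <= p and
   q (- c) <= -1 on C. *)
Section SupportingFunctional.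
Variable I : finType.
Variable p : (I -> R) -> R.
Hypothesis p_subadd : forall x y, p (fun i => x i + y i) <= p x + p y.
Hypothesis p_hom : forall t x, p (fun i => t * x i) = Rabs t * p x.
Variable C : (I -> R) -> Prop.
Hypothesis C_convex : forall x y t, C x -> C y -> 0 <= t <= 1 ->
  C (fun i => t * x i + (1 - t) * y i).
Hypothesis C_sphere : forall x, C x -> p x = 1.

Lemma p_zero : p (fun _ => 0) = 0.
Proof. by have := p_hom 0 (fun _ => 0); rewrite Rabs_R0 Rmult_0_l => ->; ring. Qed.

Lemma p_opp x : p (fun i => - x i) = p x.
Proof.
have := p_hom (-1) x; rewrite Rabs_Ropp Rabs_R1 Rmult_1_l => <-.
by congr p; apply: funext_R => i; ring.
Qed.

Lemma p_ge0 x : 0 <= p x.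
Proof.
have := p_subadd x (fun i => - x i); rewrite p_opp.
have -> : (fun i => x i + - x i) = (fun _ => 0) by apply: funext_R => i; ring.
rewrite p_zero; lra.
Qed.

Definition gauge_set (x : I -> R) (r : R) :=
  exists s c, 0 <= s /\ C c /\ r = s - p (fun i => x i + s * c i).

Lemma gauge_set_le x r : gauge_set x r -> r <= p x.
Proof.
move=> [s [c [Hs [Hc ->]]]].
have := p_subadd (fun i => x i + s * c i) (fun i => - x i).
have -> : (fun i => (x i + s * c i) + - x i) = (fun i => s * c i) by apply: funext_R => i; ring.
rewrite p_hom p_opp C_sphere // Rabs_pos_eq //; lra.
Qed.

Variable c0 : I -> R.
Hypothesis C_c0 : C c0.

Lemma gauge_set_ne x : exists r, gauge_set x r.
Proof. by exists (0 - p (fun i => x i + 0 * c0 i)), 0, c0; split; [lra | split]. Qed.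

Definition gauge (x : I -> R) : R :=
  - proj1_sig (completeness (gauge_set x) (ex_intro _ (p x) (@gauge_set_le x)) (gauge_set_ne x)).

Lemma gauge_le x s c : 0 <= s -> C c -> gauge x <= p (fun i => x i + s * c i) - s.
Proof.
move=> Hs Hc; rewrite /gauge; case: completeness => m [Hm _] /=.
suff : s - p (fun i => x i + s * c i) <= m by lra.
by apply: Hm; exists s, c.
Qed.

Lemma gauge_ge x b : (forall s c, 0 <= s -> C c -> s - p (fun i => x i + s * c i) <= b) ->
  - b <= gauge x.
Proof.
move=> H; rewrite /gauge; case: completeness => m [_ Hm] /=.
suff : m <= b by lra.
by apply: Hm => r [s [c [Hs [Hc ->]]]]; exact: H.
Qed.

Lemma gauge_le_p x : gauge x <= p x.
Proof.
have := gauge_le x (Rle_refl 0) C_c0.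
have -> : (fun i => x i + 0 * c0 i) = x by apply: funext_R => i; ring.
lra.
Qed.

Lemma gauge_zero : 0 <= gauge (fun _ => 0).
Proof.
have := @gauge_ge (fun _ => 0) 0; rewrite Ropp_0; apply => s c Hs Hc.
have -> : (fun i => 0 + s * c i) = (fun i => s * c i) by apply: funext_R => i; ring.
rewrite p_hom C_sphere // Rabs_pos_eq //; lra.
Qed.

(* Two witnesses for x and y combine, by convexity of C, into one for x + y. *)
Lemma gauge_set_add x y s c s' c' : 0 <= s -> C c -> 0 <= s' -> C c' ->
  (s - p (fun i => x i + s * c i)) + (s' - p (fun i => y i + s' * c' i))
    <= - gauge (fun i => x i + y i).
Proof.
move=> Hs Hc Hs' Hc'.
have Hsub := p_subadd (fun i => x i + s * c i) (fun i => y i + s' * c' i).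
have [Hss|Hss] := Req_dec (s + s') 0.
  have [-> ->] : s = 0 /\ s' = 0 by lra.
  have := gauge_le (fun i => x i + y i) (Rle_refl 0) Hc.
  have E (z : I -> R) d : (fun i => z i + 0 * d i) = z by apply: funext_R => i; ring.
  rewrite !E; have := p_subadd x y; lra.
set t := s / (s + s').
have Ht : 0 <= t <= 1.
  rewrite /t; split; first by apply: Rle_mult_inv_pos; lra.
  apply: (Rmult_le_reg_r (s + s')); first lra.
  by rewrite /Rdiv Rmult_assoc Rinv_l //; lra.
have := gauge_le (fun i => x i + y i) (Rplus_le_le_0_compat _ _ Hs Hs') (C_convex Hc Hc' Ht).
have -> : (fun i => x i + y i + (s + s') * (t * c i + (1 - t) * c' i)) =
          (fun i => (x i + s * c i) + (y i + s' * c' i)).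
  by apply: funext_R => i; rewrite /t; field.
lra.
Qed.

Lemma gauge_subadd x y : gauge (fun i => x i + y i) <= gauge x + gauge y.
Proof.
suff : - (gauge x - gauge (fun i => x i + y i)) <= gauge y by lra.
apply: gauge_ge => s' c' Hs' Hc'.
suff : - (- gauge (fun i => x i + y i) - (s' - p (fun i => y i + s' * c' i))) <= gauge x by lra.
apply: gauge_ge => s c Hs Hc.
have := gauge_set_add x y Hs Hc Hs' Hc'; lra.
Qed.

Lemma gauge_hom t x : 0 < t -> gauge (fun i => t * x i) = t * gauge x.
Proof.
move=> Ht; apply: Rle_antisym.
- suff : - (- gauge (fun i => t * x i) / t) <= gauge x.
    move=> H; apply/(Rmult_le_reg_r (/ t)); first exact: Rinv_0_lt_compat.
    have -> : t * gauge x * / t = gauge x by field; lra.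
    move: H; rewrite /Rdiv; lra.
  apply: gauge_ge => s c Hs Hc.
  have := gauge_le (fun i => t * x i) (Rmult_le_pos _ _ (Rlt_le _ _ Ht) Hs) Hc.
  have -> : (fun i => t * x i + t * s * c i) = (fun i => t * (x i + s * c i)).
    by apply: funext_R => i; ring.
  rewrite p_hom Rabs_pos_eq; last lra.
  move=> H; apply/(Rmult_le_reg_l t) => //.
  have -> : t * (- gauge (fun i => t * x i) / t) = - gauge (fun i => t * x i) by field; lra.
  lra.
- suff : - (- (t * gauge x)) <= gauge (fun i => t * x i) by lra.
  apply: gauge_ge => s c Hs Hc.
  have := gauge_le x (Rle_mult_inv_pos _ _ Hs Ht) Hc.
  have -> : (fun i => t * x i + s * c i) = (fun i => t * (x i + s / t * c i)).
    by apply: funext_R => i; field; lra.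
  rewrite p_hom Rabs_pos_eq; last lra.
  move=> H; have : t * gauge x <= t * (p (fun i => x i + s / t * c i) - s / t).
    by apply: Rmult_le_compat_l; lra.
  have -> : t * (p (fun i => x i + s / t * c i) - s / t) = t * p (fun i => x i + s / t * c i) - s.
    by field; lra.
  lra.
Qed.

Lemma supporting_functional_ne :
  exists a, (forall x, dot a x <= p x) /\ forall x, C x -> dot a x = 1.
Proof.
have [a Ha] := hahn_banach gauge_subadd gauge_hom gauge_zero.
exists a; split; first by move=> x; apply: Rle_trans (Ha x) (gauge_le_p x).
move=> c Hc; apply: Rle_antisym.
  by rewrite -(C_sphere Hc); apply: Rle_trans (Ha c) (gauge_le_p c).
have := Ha (fun i => -1 * c i); rewrite dot_scale.
have := gauge_le (fun i => -1 * c i) Rle_0_1 Hc.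
have -> : (fun i => -1 * c i + 1 * c i) = (fun _ => 0) by apply: funext_R => i; ring.
rewrite p_zero; lra.
Qed.

End SupportingFunctional.

Lemma supporting_functional (I : finType) (p : (I -> R) -> R)
  (p_subadd : forall x y, p (fun i => x i + y i) <= p x + p y)
  (p_hom : forall t x, p (fun i => t * x i) = Rabs t * p x)
  (C : (I -> R) -> Prop)
  (C_convex : forall x y t, C x -> C y -> 0 <= t <= 1 -> C (fun i => t * x i + (1 - t) * y i))
  (C_sphere : forall x, C x -> p x = 1) :
  exists a, (forall x, dot a x <= p x) /\ forall x, C x -> dot a x = 1.
Proof.
have [[c Hc]|Hempty] := classic (exists c, C c).
  exact (supporting_functional_ne p_subadd p_hom C_convex C_sphere Hc).
exists (fun _ => 0); split => [x|x Hx]; last by case: Hempty; exists x.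
by rewrite (_ : dot _ _ = 0); [exact: p_ge0 | apply: big1 => i _; ring].
Qed.

(* Absolutely convex combinations in R^n, represented by lists of pairs
   (coefficient, vector).  [asum l] is the l^1-norm of the coefficients and
   [lsum l f] the combination of the values of f, so that
   f (rlincomb l) = lsum l f for linear f. *)
Definition asum n (l : list (R * rvec n)) : R := fold_right (fun p s => Rabs (fst p) + s) 0 l.

Definition lsum n (l : list (R * rvec n)) (f : rvec n -> R) : R :=
  fold_right (fun p s => fst p * f (snd p) + s) 0 l.

Section AbsolutelyConvexHull.
Variable n : nat.
Implicit Types (l : list (R * rvec n)) (P Q : rvec n -> Prop).

Lemma rlincomb_coord l i : rlincomb l i = lsum l (fun y => y i).
Proof. by elim: l => [|p l IH] //=; rewrite /rvadd /rvscale -/(rlincomb _) IH. Qed.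

Lemma rlincomb_app l1 l2 i : rlincomb (l1 ++ l2) i = rlincomb l1 i + rlincomb l2 i.
Proof. by rewrite !rlincomb_coord; elim: l1 => [|p l IH] /=; rewrite ?IH; ring. Qed.

Lemma asum_app l1 l2 : asum (l1 ++ l2) = asum l1 + asum l2.
Proof. by elim: l1 => [|p l IH] /=; rewrite ?IH; ring. Qed.

Lemma asum_map_vec (f : rvec n -> rvec n) l :
  asum (map (fun p => (fst p, f (snd p))) l) = asum l.
Proof. by elim: l => [|p l IH] //=; rewrite IH. Qed.

Definition lscale c l := map (fun p => (c * fst p, snd p)) l.

Lemma rlincomb_scale c l i : rlincomb (lscale c l) i = c * rlincomb l i.
Proof. by rewrite !rlincomb_coord; elim: l => [|p l IH] /=; rewrite ?IH; ring. Qed.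

Lemma asum_scale c l : asum (lscale c l) = Rabs c * asum l.
Proof. by elim: l => [|p l IH] /=; rewrite ?IH ?Rabs_mult; ring. Qed.

Lemma lsum_le_asum l f : (forall p, In p l -> Rabs (f (snd p)) <= 1) -> lsum l f <= asum l.
Proof.
elim: l => [|p l IH] H /=; first lra.
have := IH (fun q Hq => H q (or_intror Hq)); have := H p (or_introl erefl).
have := Rle_abs (fst p * f (snd p)); rewrite Rabs_mult; have := Rabs_pos (fst p); nra.
Qed.

Lemma lsum_eq_asum l f : (forall p, In p l -> Rabs (f (snd p)) <= 1) ->
  lsum l f = asum l -> forall p, In p l -> fst p * f (snd p) = Rabs (fst p).
Proof.
elim: l => [|p l IH] H //= Heq q Hq.
have Hl := lsum_le_asum (fun r Hr => H r (or_intror Hr)).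
have Hp : fst p * f (snd p) <= Rabs (fst p).
  have := H p (or_introl erefl); have := Rle_abs (fst p * f (snd p)).
  rewrite Rabs_mult; have := Rabs_pos (fst p); nra.
case: Hq => [<-|Hq]; first lra.
have Hrest : lsum l f = asum l by lra.
exact: (IH (fun r Hr => H r (or_intror Hr)) Hrest q Hq).
Qed.

Lemma lsum_pos_zero l f : (forall p, In p l -> 0 < fst p /\ 0 <= f (snd p)) ->
  lsum l f = 0 -> forall p, In p l -> f (snd p) = 0.
Proof.
have Hge : forall l, (forall p, In p l -> 0 < fst p /\ 0 <= f (snd p)) -> 0 <= lsum l f.
  elim=> [|r l' IH] H' /=; first lra.
  have [? ?] := H' r (or_introl erefl); have := IH (fun s Hs => H' s (or_intror Hs)); nra.
elim: l => [|p l IH] H //= Heq q Hq.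
have [h1 h2] := H p (or_introl erefl).
have Hr := Hge l (fun r Hr => H r (or_intror Hr)).
have h3 : fst p * f (snd p) = 0 by nra.
case: Hq => [<-|Hq]; first by case: (Rmult_integral _ _ h3) => //; lra.
have Hrest : lsum l f = 0 by lra.
exact: (IH (fun r Hr => H r (or_intror Hr)) Hrest q Hq).
Qed.

Lemma aco_mono P Q x : (forall y, P y -> Q y) -> aco_R P x -> aco_R Q x.
Proof. by move=> H [l [H1 H2]]; exists l; split => // p /H1 /H. Qed.

Lemma aco_self P x : P x -> aco_R P x.
Proof.
move=> H; exists ((1, x) :: nil); split; first by move=> p [<-|[]].
split; first by rewrite /= Rabs_R1; lra.
by move=> i; rewrite /= /rvadd /rvscale /rvzero /=; ring.
Qed.

Lemma aco_list P l : (forall p, In p l -> aco_R P (snd p)) ->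
  exists l', (forall p, In p l' -> P (snd p)) /\ asum l' <= asum l /\
    forall i, rlincomb l' i = rlincomb l i.
Proof.
elim: l => [|[c y] l IH] H.
  by exists nil; split => //; split; [rewrite /=; lra |].
have [l' [H1 [H2 H3]]] := IH (fun p Hp => H p (or_intror Hp)).
have [m [Hm1 [Hm2 Hm3]]] := H (c, y) (or_introl erefl).
exists (lscale c m ++ l'); split.
  move=> p Hp; case: (in_app_or _ _ _ Hp) => [Hmap|]; last exact: H1.
  have [q [<- Hq]] := proj1 (in_map_iff _ _ _) Hmap.
  exact: (Hm1 _ Hq).
split.
  rewrite asum_app asum_scale /=; change (asum m <= 1) in Hm2.
  have := Rmult_le_compat_l _ _ _ (Rabs_pos c) Hm2; lra.
by move=> i; rewrite rlincomb_app rlincomb_scale H3 -Hm3.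
Qed.

Lemma aco_trans P x : aco_R (aco_R P) x -> aco_R P x.
Proof.
move=> [l [H1 [H2 H3]]]; have [l' [H1' [H2' H3']]] := aco_list H1.
exists l'; split => //; split; [change (asum l' <= 1); change (asum l <= 1) in H2; lra | ].
by move=> i; rewrite H3 H3'.
Qed.

Lemma aco_refine P l :
  (forall p, In p l -> fst p = 0 \/
     exists q, 0 < fst q /\ P (snd q) /\ Rabs (fst q) <= Rabs (fst p) /\
               forall i, fst q * snd q i = fst p * snd p i) ->
  exists l', (forall p, In p l' -> 0 < fst p /\ P (snd p)) /\ asum l' <= asum l /\
    forall i, rlincomb l' i = rlincomb l i.
Proof.
elim: l => [|p l IH] H.
  by exists nil; split => //; split; [rewrite /=; lra |].
have [l' [H1 [H2 H3]]] := IH (fun q Hq => H q (or_intror Hq)).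
have Hp0 := Rabs_pos (fst p).
case: (H p (or_introl erefl)) => [Hp|[q [Hq0 [Hq [Hqp Hqi]]]]].
  exists l'; split => //; split; first by rewrite /=; lra.
  by move=> i; rewrite H3 /= /rvadd /rvscale Hp; ring.
exists (q :: l'); split; first by move=> r [<-|]; [split | exact: H1].
split; first by rewrite /=; lra.
by move=> i; rewrite /= /rvadd /rvscale -/(rlincomb _) H3 Hqi.
Qed.

End AbsolutelyConvexHull.

(* By the
   supporting functional theorem every maximal convex subset of the sphere is
   such a face. *)
Section RealFaces.
Variable n : nat.
Variable N : rvec n -> R.
Hypothesis HN : is_absolute_norm N.

Definition dominated (a : rvec n) := forall x, dot a x <= N x.
Definition face (a x : rvec n) := N x = 1 /\ dot a x = 1.

Lemma dot_rlincomb a (l : list (R * rvec n)) : dot a (rlincomb l) = lsum l (dot a).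
Proof.
elim: l => [|p l IH] /=; first exact: dot_zero.
by rewrite /rvadd /rvscale dot_add dot_scale -/(rlincomb _) IH.
Qed.

Lemma aco_ball (F : rvec n -> Prop) x : (forall y, F y -> N y = 1) -> aco_R F x -> N x <= 1.
Proof.
move=> HF [l [H1 [H2 H3]]].
have -> : x = rlincomb l by apply: funext_R.
apply: Rle_trans H2.
elim: l H1 {H3} => [|p l IH] H1 /=; first by rewrite N_zero //; lra.
apply: Rle_trans (N_tri HN _ _) _; rewrite N_scale // HF; last by apply: H1; left.
have := IH (fun q Hq => H1 q (or_intror Hq)); lra.
Qed.

Lemma face_convex a : dominated a -> convex_R (face a) /\ (forall x, face a x -> N x = 1).
Proof.
move=> Hd; split => [x y t [Hx1 Hx2] [Hy1 Hy2] Ht|x []] //.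
have Hdot : dot a (rvadd (rvscale t x) (rvscale (1 - t) y)) = 1.
  by rewrite /rvadd /rvscale dot_add !dot_scale Hx2 Hy2; ring.
split => //; apply: Rle_antisym; last by have := Hd (rvadd (rvscale t x) (rvscale (1 - t) y)); lra.
apply: Rle_trans (N_tri HN _ _) _; rewrite !N_scale // Hx1 Hy1 !Rabs_pos_eq; lra.
Qed.

Lemma face_of_convex (C : rvec n -> Prop) : convex_R C -> (forall x, C x -> N x = 1) ->
  exists a, dominated a /\ forall x, C x -> face a x.
Proof.
move=> Hc Hs.
have [a [Hd Ha]] := supporting_functional (N_tri HN) (N_scale HN) Hc Hs.
by exists a; split => // x Hx; split; [exact: Hs | exact: Ha].
Qed.

Lemma max_face F : max_convex_in_sphere_R N F ->
  exists a, dominated a /\ forall x, F x <-> face a x.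
Proof.
move=> [Hs [Hc Hmax]]; have [a [Hd Ha]] := face_of_convex Hc Hs.
exists a; split => // x; split; first exact: Ha.
have [Hc' Hs'] := face_convex Hd; exact: Hmax (face a) Hs' Hc' Ha x.
Qed.

Lemma max_ext F F' : (forall x, F x <-> F' x) ->
  max_convex_in_sphere_R N F -> max_convex_in_sphere_R N F'.
Proof.
move=> E [H1 [H2 H3]]; split; first by move=> x /E; exact: H1.
split; first by move=> x y t /E Hx /E Hy Ht; apply/E; exact: H2.
move=> G HG1 HG2 HG3 x Hx; apply/E; apply: (H3 G) => // y /E; exact: HG3.
Qed.

Lemma face_term a x : dominated a -> (forall i, 0 <= a i) -> face a x ->
  forall i, a i * x i = a i * Rabs (x i).
Proof.
move=> Hd Ha [Hx1 Hx2]; apply: sum_le_eq.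
  by move=> i; have := Ha i; have := Rle_abs (x i); nra.
apply: Rle_antisym; first by apply: sum_le => i; have := Ha i; have := Rle_abs (x i); nra.
have H := Hd (rvabs x); rewrite -(N_abs HN) Hx1 in H.
by move: H Hx2; rewrite /dot /rvabs; lra.
Qed.

Lemma face_nonneg a x : dominated a -> (forall i, 0 <= a i) -> face a x ->
  forall i, 0 <= a i * x i.
Proof. by move=> Hd Ha Hx i; rewrite (face_term Hd Ha Hx); have := Ha i; have := Rabs_pos (x i); nra. Qed.

Lemma face_flip a x j : a j = 0 -> face a x -> face a (upd x j (- x j)).
Proof.
move=> Hj [Hx1 Hx2]; split; last by rewrite dot_upd_r Hj; lra.
by rewrite -Hx1; apply: (N_absext HN) => i; rewrite /upd; case: eqP => [->|]; rewrite ?Rabs_Ropp.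
Qed.

Definition sflip (s x : rvec n) : rvec n := fun i => s i * x i.
Definition is_sign (s : rvec n) := forall i, s i = 1 \/ s i = -1.

Lemma sflipK s x : is_sign s -> sflip s (sflip s x) = x.
Proof. by move=> H; apply: funext_R => i; rewrite /sflip; case: (H i) => ->; ring. Qed.

Lemma N_sflip s x : is_sign s -> N (sflip s x) = N x.
Proof.
move=> H; apply: (N_absext HN) => i; rewrite /sflip Rabs_mult.
by case: (H i) => ->; rewrite ?Rabs_Ropp Rabs_R1; ring.
Qed.

Lemma dot_sflip s a x : dot a (sflip s x) = dot (sflip s a) x.
Proof. by apply: eq_bigr => i _; rewrite /sflip; ring. Qed.

Lemma face_sflip s a x : is_sign s -> (face (sflip s a) x <-> face a (sflip s x)).
Proof. by move=> Hs; rewrite /face dot_sflip (N_sflip x Hs). Qed.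

Lemma sflip_lin s t u x y : sflip s (rvadd (rvscale t x) (rvscale u y)) =
  rvadd (rvscale t (sflip s x)) (rvscale u (sflip s y)).
Proof. by apply: funext_R => i; rewrite /sflip /rvadd /rvscale; ring. Qed.

Lemma max_sflip s F : is_sign s -> max_convex_in_sphere_R N F ->
  max_convex_in_sphere_R N (fun x => F (sflip s x)).
Proof.
move=> Hs [H1 [H2 H3]]; split; first by move=> x Hx; rewrite -(N_sflip x Hs); exact: H1.
split; first by move=> x y t Hx Hy Ht; rewrite sflip_lin; exact: H2.
move=> G HG1 HG2 HG3 x Hx; apply: (H3 (fun y => G (sflip s y))); last by rewrite sflipK.
- by move=> y Hy; rewrite -(N_sflip y Hs); exact: HG1.
- by move=> y z t Hy Hz Ht; rewrite sflip_lin; exact: HG2.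
- by move=> y Hy; apply: HG3; rewrite sflipK.
Qed.

Lemma rlincomb_sflip s (l : list (R * rvec n)) i :
  rlincomb (map (fun p => (fst p, sflip s (snd p))) l) i = s i * rlincomb l i.
Proof. by rewrite !rlincomb_coord; elim: l => [|p l IH] /=; rewrite ?IH /sflip; ring. Qed.

Lemma aco_sflip s F x : is_sign s -> aco_R F (sflip s x) -> aco_R (fun y => F (sflip s y)) x.
Proof.
move=> Hs [l [H1 [H2 H3]]].
exists (map (fun p => (fst p, sflip s (snd p))) l); split.
  move=> p Hp; have [q [<- Hq]] := proj1 (in_map_iff _ _ _) Hp.
  by rewrite /= sflipK //; exact: H1.
split; first by change (asum (map (fun p => (fst p, sflip s (snd p))) l) <= 1); rewrite asum_map_vec.
by move=> i; rewrite rlincomb_sflip -H3 /sflip; case: (Hs i) => ->; ring.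
Qed.

End RealFaces.

(* Faces of the complex unit ball, described by the real part of the
   complex pairing: cdot g z = Re (sum conj(g_i) z_i). *)
Section ComplexFaces.
Variable n : nat.
Variable N : rvec n -> R.
Hypothesis HN : is_absolute_norm N.

Definition cdot (g z : cvec n) : R := \big[Rplus/0]_(i : 'I_n) cinner (g i) (z i).
Definition cdominated (g : cvec n) := forall z, cdot g z <= cnorm N z.
Definition cface (g z : cvec n) := cnorm N z = 1 /\ cdot g z = 1.

Lemma cnorm_tri z w : cnorm N (cvadd z w) <= cnorm N z + cnorm N w.
Proof.
apply: Rle_trans (N_tri HN (fun i => cabs (z i)) (fun i => cabs (w i))).
apply: (N_mono HN) => i; rewrite /rvadd /cvadd cabs_abs Rabs_pos_eq; first exact: cabs_add.
by apply: Rplus_le_le_0_compat; exact: cabs_ge0.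
Qed.

Lemma cnorm_scale c z : cnorm N (cvscale c z) = cabs c * cnorm N z.
Proof.
rewrite /cnorm -{1}(cabs_abs c) -(N_scale HN).
by apply: N_ext => i; rewrite /rvscale /cvscale cabs_mul.
Qed.

Lemma cdot_add g z w : cdot g (cvadd z w) = cdot g z + cdot g w.
Proof. by rewrite /cdot -sum_add; apply: eq_bigr => i _; rewrite /cinner /cvadd /cadd /=; ring. Qed.

Lemma cdot_rscale g t z : cdot g (cvscale (cofR t) z) = t * cdot g z.
Proof. by rewrite /cdot -sum_scale; apply: eq_bigr => i _; rewrite /cinner /cvscale /cmul /cofR /=; ring. Qed.

Lemma cface_convex g : cdominated g -> convex_C (cface g) /\ (forall z, cface g z -> cnorm N z = 1).
Proof.
move=> Hd; split => [x y t [Hx1 Hx2] [Hy1 Hy2] Ht|z []] //.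
set m := cvadd _ _.
have Hdot : cdot g m = 1 by rewrite cdot_add !cdot_rscale Hx2 Hy2; ring.
split => //; apply: Rle_antisym; last by have := Hd m; lra.
apply: Rle_trans (cnorm_tri _ _) _.
rewrite !cnorm_scale !cabs_cofR Hx1 Hy1 !Rabs_pos_eq; lra.
Qed.

(* C^n is R^(n x 2): the real coordinates of z are (Re z_i, Im z_i). *)
Definition of_pairs (y : 'I_n * bool -> R) : cvec n := fun i => (y (i, true), y (i, false)).
Definition to_pairs (z : cvec n) : 'I_n * bool -> R :=
  fun p => if p.2 then fst (z p.1) else snd (z p.1).

Lemma of_pairsK z : of_pairs (to_pairs z) = z.
Proof. by apply: functional_extensionality => i; rewrite /of_pairs /to_pairs /=; case: (z i). Qed.

Lemma dot_pairs (a y : 'I_n * bool -> R) : dot a y = cdot (of_pairs a) (of_pairs y).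
Proof.
rewrite /dot /cdot.
transitivity (\big[Rplus/0]_(p : 'I_n * bool) (fun i b => a (i, b) * y (i, b)) p.1 p.2).
  by apply: eq_bigr => -[i b] _.
rewrite -(pair_bigA _ (fun i b => a (i, b) * y (i, b))) /=.
by apply: eq_bigr => i _; rewrite big_bool.
Qed.

(* Every convex subset of the complex unit sphere lies in a face: apply the
   supporting functional theorem in R^(n x 2). *)
Lemma cface_of_convex (C : cvec n -> Prop) : convex_C C -> (forall z, C z -> cnorm N z = 1) ->
  exists g, cdominated g /\ forall z, C z -> cface g z.
Proof.
move=> Hc Hs.
pose p y := cnorm N (of_pairs y).
have Hpt : forall x y, p (fun i => x i + y i) <= p x + p y.
  move=> x y; rewrite /p (_ : of_pairs _ = cvadd (of_pairs x) (of_pairs y)) //.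
  exact: cnorm_tri.
have Hph : forall t x, p (fun i => t * x i) = Rabs t * p x.
  move=> t x; rewrite /p (_ : of_pairs _ = cvscale (cofR t) (of_pairs x)).
    by rewrite cnorm_scale cabs_cofR.
  apply: functional_extensionality => i; apply: cpair_eq; rewrite /of_pairs /cvscale /cmul /cofR /=; ring.
have Hcv : forall x y t, C (of_pairs x) -> C (of_pairs y) -> 0 <= t <= 1 ->
    C (of_pairs (fun i => t * x i + (1 - t) * y i)).
  move=> x y t Hx Hy Ht.
  rewrite (_ : of_pairs _ = cvadd (cvscale (cofR t) (of_pairs x)) (cvscale (cofR (1 - t)) (of_pairs y))).
    exact: Hc.
  apply: functional_extensionality => i; apply: cpair_eq;
    rewrite /of_pairs /cvadd /cadd /cvscale /cmul /cofR /=; ring.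
have [a [Ha1 Ha2]] := supporting_functional Hpt Hph Hcv (fun y Hy => Hs _ Hy).
exists (of_pairs a); split.
  by move=> z; rewrite -{1}(of_pairsK z) -dot_pairs; have := Ha1 (to_pairs z); rewrite /p of_pairsK.
move=> z Hz; split; first exact: Hs.
by rewrite -(of_pairsK z) -dot_pairs; apply: Ha2; rewrite of_pairsK.
Qed.

Lemma max_cface G : max_convex_in_sphere_C (cnorm N) G ->
  exists g, cdominated g /\ forall z, G z <-> cface g z.
Proof.
move=> [Hs [Hc Hmax]]; have [g [Hd Hg]] := cface_of_convex Hc Hs.
exists g; split => // z; split; first exact: Hg.
have [Hc' Hs'] := cface_convex Hd; exact: Hmax (cface g) Hs' Hc' Hg z.
Qed.

Lemma caco_ball (F : cvec n -> Prop) z : (forall y, F y -> cnorm N y = 1) -> aco_C F z ->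
  cnorm N z <= 1.
Proof.
move=> HF [l [H1 [H2 H3]]].
have -> : z = clincomb l by apply: functional_extensionality.
apply: Rle_trans H2.
elim: l H1 {H3} => [|p l IH] H1 /=.
  suff -> : cnorm N (fun _ => c0) = 0 by lra.
  by rewrite /cnorm -(N_zero HN); apply: N_ext => i; rewrite cabs_c0.
apply: Rle_trans (cnorm_tri _ _) _; rewrite cnorm_scale HF; last by apply: H1; left.
have := IH (fun q Hq => H1 q (or_intror Hq)); lra.
Qed.

(* The moduli |h_i| of a dominated complex functional form a dominated real
   functional: test h against the vector phase(h_i) |x_i|. *)
Lemma dominated_cabs h : cdominated h -> dominated N (fun i => cabs (h i)).
Proof.
move=> Hd x.
apply: Rle_trans (_ : dot (fun i => cabs (h i)) (rvabs x) <= _).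
  by apply: sum_le => i; rewrite /rvabs; have := cabs_ge0 (h i); have := Rle_abs (x i); nra.
pose z i := cmul (phase (h i)) (cofR (Rabs (x i))).
have -> : dot (fun i => cabs (h i)) (rvabs x) = cdot h z.
  by apply: eq_bigr => i _; rewrite /z cinner_phase.
apply: Rle_trans (Hd z) _; apply: Req_le.
by rewrite (N_abs HN x) /cnorm; apply: N_ext => i; rewrite /z cabs_phase_mul Rabs_Rabsolu.
Qed.

Lemma cdot_embed a z : cdot (embed a) z = dot a (fun i => fst (z i)).
Proof. by apply: eq_bigr => i _; rewrite /cinner /embed /cofR /=; ring. Qed.

End ComplexFaces.

(* If X_C is a CL-space, so is X.  Throughout, a >= 0 is a dominated real
   functional; the complex face of embed a consists of the z with
   <a, Re z> = 1 on the complex unit sphere. *)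
Section ComplexToReal.
Variable n : nat.
Variable N : rvec n -> R.
Hypothesis HN : is_absolute_norm N.
Variable a : rvec n.
Hypothesis a_dom : dominated N a.
Hypothesis a_ge0 : forall i, 0 <= a i.

Lemma cdominated_embed : cdominated N (embed a).
Proof. by move=> z; rewrite cdot_embed; apply: Rle_trans (a_dom _) (N_Re_le HN z). Qed.

Lemma face_embed x : face N a x -> cface N (embed a) (embed x).
Proof. by move=> [Hx1 Hx2]; split; [rewrite cnorm_embed | rewrite cdot_embed]. Qed.

Lemma cface_embed_moduli z : cface N (embed a) z ->
  (forall i, a i * fst (z i) = a i * cabs (z i)) /\ dot a (fun i => cabs (z i)) = 1.
Proof.
move=> [Hz1 Hz2]; rewrite cdot_embed in Hz2.
have Hle : forall i, a i * fst (z i) <= a i * cabs (z i).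
  by move=> i; have := a_ge0 i; have := Re_le_cabs (z i); have := Rle_abs (fst (z i)); nra.
have Hup : dot a (fun i => cabs (z i)) <= 1 by rewrite -Hz1; exact: a_dom.
have Hlo : 1 <= dot a (fun i => cabs (z i)) by rewrite -Hz2; exact: sum_le.
split; last lra.
by apply: sum_le_eq => //; move: Hz2 Hup Hlo; rewrite /dot; lra.
Qed.

Lemma cface_embed_real z i : cface N (embed a) z -> 0 < a i -> z i = cofR (cabs (z i)).
Proof.
move=> Hz Hai; have [Hterm _] := cface_embed_moduli Hz.
have HRe : fst (z i) = cabs (z i) by apply: (Rmult_eq_reg_l (a i)); [exact: Hterm | lra].
have HIm : snd (z i) = 0 by apply: cabs_eq_Re; rewrite -HRe Rabs_pos_eq // HRe; exact: cabs_ge0.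
exact: cpair_eq.
Qed.

Lemma face_sub_moduli_face h : cdominated N h ->
  (forall x, face N a x -> cface N h (embed x)) ->
  forall x, face N a x -> face N (fun i => cabs (h i)) x.
Proof.
move=> Hh Hemb.
set c := fun i => cabs (h i).
have Hc : dominated N c := dominated_cabs HN Hh.
have HRe : forall y, cdot h (embed y) = dot (fun i => fst (h i)) y.
  by move=> y; apply: eq_bigr => i _; rewrite /cinner /embed /cofR /=; ring.
have Hterm : forall y, face N a y -> forall i, fst (h i) * y i = c i * Rabs (y i).
  move=> y Hy; have [_ Hy2] := Hemb y Hy; rewrite HRe in Hy2.
  have Hle : forall i, fst (h i) * y i <= c i * Rabs (y i).
    move=> i; have := Re_le_cabs (h i); have := Rabs_pos (y i).
    by have := Rle_abs (fst (h i) * y i); rewrite /c Rabs_mult; nra.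
  have Hup : dot c (rvabs y) <= 1 by rewrite -(proj1 Hy) (N_abs HN y); exact: Hc.
  have Hlo : 1 <= dot c (rvabs y) by rewrite -Hy2; exact: sum_le.
  by apply: sum_le_eq => //; move: Hy2 Hup Hlo; rewrite /dot /rvabs; lra.
move=> x Hx; split; first by case: Hx.
have Hsign : forall i, c i * x i = c i * Rabs (x i).
  move=> i; case: (Rle_dec 0 (x i)) => Hxi; first by rewrite Rabs_pos_eq.
  have Hai : a i = 0.
    by have := face_term HN a_dom a_ge0 Hx i; have := a_ge0 i; rewrite Rabs_left; [nra | lra].
  have := Hterm _ (face_flip HN Hai Hx) i; rewrite /upd eqxx Rabs_Ropp.
  have := Hterm _ Hx i; rewrite Rabs_left; [|lra].
  lra.
rewrite -(proj2 (Hemb x Hx)) HRe.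
by apply: eq_bigr => i _; rewrite Hsign Hterm.
Qed.

(* If G is convex, contains z and embed |z|, and the moduli of all its points
   lie in the real face of a, then Re z_i = |z_i| wherever a_i > 0: the
   midpoint of z and |z| must have the same moduli as z there. *)
Lemma Re_eq_cabs_on_support (G : cvec n -> Prop) z : convex_C G -> G z ->
  G (embed (fun i => cabs (z i))) -> (forall w, G w -> face N a (fun i => cabs (w i))) ->
  forall i, a i * fst (z i) = a i * cabs (z i).
Proof.
move=> Hconv Hz Hz' Habs.
set m := cvadd (cvscale (cofR (1/2)) z) (cvscale (cofR (1 - 1/2)) (embed (fun i => cabs (z i)))).
have Hm : G m by apply: Hconv => //; lra.
have Hle : forall i, a i * cabs (m i) <= a i * cabs (z i).
  move=> i; apply: Rmult_le_compat_l; first exact: a_ge0.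
  rewrite /m /cvadd /cvscale; apply: Rle_trans (cabs_add _ _) _.
  by rewrite !cabs_mul /embed !cabs_cofR cabs_abs !Rabs_pos_eq; lra.
have Heq := sum_le_eq Hle (etrans (proj2 (Habs m Hm)) (esym (proj2 (Habs z Hz)))).
move=> i; have [->|Hai] := Req_dec (a i) 0; first by ring.
congr (_ * _); have Hmi : cabs (m i) = cabs (z i) by apply: (Rmult_eq_reg_l (a i)); [exact: Heq|].
have : cabs (m i) * cabs (m i) = cabs (z i) * cabs (z i) by rewrite Hmi.
rewrite cabs_sq [RHS]cabs_sq /m /cvadd /cvscale /cadd /cmul /embed /cofR /=.
have := cabs_sq (z i); have := cabs_ge0 (z i); have := Re_le_cabs (z i) => HRe Hr0 Hsq Hmsq.
have Hprod : cabs (z i) * (fst (z i) - cabs (z i)) = 0 by nra.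
case: (Rmult_integral _ _ Hprod) => [H0|]; last lra.
by move: HRe; rewrite H0; split_Rabs; lra.
Qed.

Lemma cface_embed_max : max_convex_in_sphere_R N (face N a) ->
  max_convex_in_sphere_C (cnorm N) (cface N (embed a)).
Proof.
move=> [_ [_ Fmax]].
have [Cc Cs] := cface_convex HN cdominated_embed.
split; first exact: Cs; split; first exact: Cc.
move=> G HG1 HG2 HG3.
have [h [Hh HGh]] := cface_of_convex HN HG2 HG1.
have Hsub := face_sub_moduli_face Hh (fun x Hx => HGh _ (HG3 _ (face_embed Hx))).
have [Fc Fs] := face_convex HN (dominated_cabs HN Hh).
have Hback := Fmax _ Fs Fc Hsub.
have Habs : forall w, G w -> face N a (fun i => cabs (w i)).
  move=> w Hw; apply: Hback; have [Hw1 Hw2] := HGh _ Hw; split => //.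
  apply: Rle_antisym; first by rewrite -Hw1; exact: dominated_cabs.
  by rewrite -Hw2; apply: sum_le => i; exact: cinner_le.
move=> z Hz; split; first exact: HG1.
rewrite cdot_embed -(proj2 (Habs z Hz)); apply: eq_bigr => i _.
exact: Re_eq_cabs_on_support HG2 Hz (HG3 _ (face_embed (Habs z Hz))) Habs i.
Qed.

Lemma face_below z y : cface N (embed a) z -> (forall i, Rabs (y i) <= cabs (z i)) ->
  (forall i, 0 < a i -> y i = cabs (z i)) -> face N a y.
Proof.
move=> Hz Hy Hsupp; have [_ Hdot] := cface_embed_moduli Hz.
have Hdy : dot a y = 1.
  rewrite -Hdot; apply: eq_bigr => i _.
  case: (Rlt_dec 0 (a i)) => Hai; first by rewrite Hsupp.
  have -> : a i = 0 by have := a_ge0 i; lra.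
  ring.
split => //; apply: Rle_antisym; last by rewrite -Hdy; exact: a_dom.
by rewrite -(proj1 Hz); apply: (N_mono HN) => i; rewrite cabs_abs.
Qed.

(* Re (mu z) for z in the complex face is a combination of two points of the
   real face with l^1 weight |mu|: where a_i > 0 it equals Re mu |z_i|, and
   elsewhere it is split as ((r + Re mu) v_i - (r - Re mu) (- v_i)) / 2 r
   with r = |mu| and v_i = Re (mu z_i). *)
Lemma split_coefficient mu z : cface N (embed a) z ->
  exists l, (forall p, In p l -> face N a (snd p)) /\ asum l <= cabs mu /\
    forall i, rlincomb l i = fst (cmul mu (z i)).
Proof.
move=> Hz.
set r := cabs mu; pose v i := fst (cmul mu (z i)).
pose y (sg : R) i := if Rlt_dec 0 (a i) then cabs (z i) else sg * v i / r.
have Hr0 : 0 <= r := cabs_ge0 mu.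
have Hv : forall i, Rabs (v i) <= r * cabs (z i).
  by move=> i; rewrite /v /r -cabs_mul; exact: Re_le_cabs.
have Hface : forall sg, Rabs sg = 1 -> face N a (y sg).
  move=> sg Hsg; apply: face_below Hz _ _ => i; rewrite /y; case: Rlt_dec => //= _.
    by rewrite cabs_abs; exact: Rle_refl.
  have [Hr|Hr] := Req_dec r 0.
    have : v i = 0 by have := Hv i; rewrite Hr Rmult_0_l; split_Rabs; lra.
    by move=> ->; rewrite Rmult_0_r /Rdiv Rmult_0_l Rabs_R0; exact: cabs_ge0.
  rewrite /Rdiv !Rabs_mult Hsg Rmult_1_l Rabs_inv (Rabs_pos_eq r) //.
  apply: (Rmult_le_reg_r r); first lra.
  by rewrite Rmult_assoc Rinv_l // Rmult_1_r; have := Hv i; lra.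
exists (((r + fst mu) / 2, y 1) :: (- ((r - fst mu) / 2), y (-1)) :: nil); split.
  by move=> p [<-|[<-|[]]] /=; apply: Hface; rewrite ?Rabs_Ropp Rabs_R1.
split.
  by rewrite /asum /=; have := Re_le_cabs mu; rewrite -/r; split_Rabs; lra.
move=> i; rewrite /= /rvadd /rvscale /rvzero /= -/(v i) /y; case: Rlt_dec => Hai /=.
  by rewrite /v [in RHS](cface_embed_real Hz Hai) /cmul /cofR /=; field.
have [Hr|Hr] := Req_dec r 0; last by rewrite /v /cmul /=; field.
by rewrite /v (cabs0 Hr) /cmul /c0 /= /Rdiv; ring.
Qed.

Lemma real_part_combination (lc : list (cplx * cvec n)) :
  (forall p, In p lc -> cface N (embed a) (snd p)) ->
  exists l, (forall p, In p l -> face N a (snd p)) /\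
    asum l <= fold_right (fun p s => cabs (fst p) + s) 0 lc /\
    forall i, rlincomb l i = fst (clincomb lc i).
Proof.
elim: lc => [|[mu z] lc IH] H.
  by exists nil; split => //; split; [rewrite /=; lra |].
have [l' [H1 [H2 H3]]] := IH (fun p Hp => H p (or_intror Hp)).
have [m [Hm1 [Hm2 Hm3]]] := split_coefficient mu (H (mu, z) (or_introl erefl)).
exists (m ++ l'); split.
  by move=> p Hp; case: (in_app_or _ _ _ Hp); [exact: Hm1 | exact: H1].
split; first by rewrite asum_app /=; lra.
by move=> i; rewrite rlincomb_app Hm3 H3.
Qed.

Lemma real_ball_in_aco : (forall w, cnorm N w <= 1 -> aco_C (cface N (embed a)) w) ->
  forall x, N x <= 1 -> aco_R (face N a) x.
Proof.
move=> Hcl x Hx.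
have [lc [H1 [H2 H3]]] := Hcl (embed x) ltac:(by rewrite cnorm_embed).
have [l [L1 [L2 L3]]] := real_part_combination H1.
exists l; split => //; split; first by change (asum l <= 1); lra.
by move=> i; rewrite L3 -H3.
Qed.

End ComplexToReal.

(* Second half of the theorem, first direction.  A maximal face of B_X is,
   after a change of signs, the face of some a >= 0. *)
Lemma CL_complex_to_real n (N : rvec n -> R) : is_absolute_norm N ->
  is_CL_C (cnorm N) -> is_CL_R N.
Proof.
move=> HN HC F HF x; split; last by apply: aco_ball => //; case: HF.
move=> Hx.
have [b [Hb HFb]] := max_face HN HF.
pose s i := if Rle_dec 0 (b i) then 1 else -1.
have Hs : is_sign s by move=> i; rewrite /s; case: (Rle_dec 0 (b i)) => ? /=; [left | right].
pose a := sflip s b.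
have Ha0 : forall i, 0 <= a i by move=> i; rewrite /a /sflip /s; case: (Rle_dec 0 (b i)) => /= ?; lra.
have Hd : dominated N a by move=> y; rewrite /a -dot_sflip -(N_sflip HN y Hs); exact: Hb.
have HFa : forall y, face N a y <-> F (sflip s y) by move=> y; rewrite (face_sflip HN b y Hs) HFb.
have Hmax : max_convex_in_sphere_R N (face N a).
  by apply: max_ext (max_sflip HN Hs HF) => y; rewrite HFa.
have Hcl := real_ball_in_aco HN Hd Ha0 (fun w Hw => proj1 (HC _ (cface_embed_max HN Hd Ha0 Hmax) w) Hw).
have := aco_sflip Hs (Hcl (sflip s x) ltac:(by rewrite (N_sflip HN x Hs))).
by apply: aco_mono => y; rewrite HFa sflipK.
Qed.

Section RealToComplex.
Variable n : nat.
Variable N : rvec n -> R.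
Hypothesis HN : is_absolute_norm N.
Variable g : cvec n.
Hypothesis g_dom : cdominated N g.

Definition moduli : rvec n := fun i => cabs (g i).
Definition rotate (x : rvec n) : cvec n := fun i => cmul (phase (g i)) (cofR (x i)).

Lemma moduli_ge0 i : 0 <= moduli i.
Proof. exact: cabs_ge0. Qed.

Lemma cnorm_rotate x : cnorm N (rotate x) = N x.
Proof. by rewrite /cnorm (N_abs HN x); apply: N_ext => i; rewrite /rotate cabs_phase_mul. Qed.

Lemma cdot_rotate x : cdot g (rotate x) = dot moduli x.
Proof. by apply: eq_bigr => i _; rewrite /rotate cinner_phase. Qed.

Lemma cdot_rotate_l b z : cdot (rotate b) z = dot b (fun i => cinner (phase (g i)) (z i)).
Proof. by apply: eq_bigr => i _; rewrite /rotate cinner_scale. Qed.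

Lemma cdot_rotate_rotate b x : cdot (rotate b) (rotate x) = dot b x.
Proof. by rewrite cdot_rotate_l; apply: eq_bigr => i _; rewrite cinner_unit ?cabs_phase. Qed.

Lemma rotate_cdominated b : dominated N b -> cdominated N (rotate b).
Proof.
move=> Hb z; rewrite cdot_rotate_l; apply: Rle_trans (Hb _) _.
apply: (N_mono HN) => i; rewrite cabs_abs.
by have := cinner_abs_le (phase (g i)) (z i); rewrite cabs_phase Rmult_1_l.
Qed.

Lemma cface_moduli z : cface N g z ->
  face N moduli (fun i => cabs (z i)) /\ forall i, cinner (g i) (z i) = moduli i * cabs (z i).
Proof.
move=> [Hz1 Hz2].
have Hle : forall i, cinner (g i) (z i) <= moduli i * cabs (z i) by move=> i; exact: cinner_le.
have Hup : dot moduli (fun i => cabs (z i)) <= 1 by rewrite -Hz1; exact: (dominated_cabs HN g_dom).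
have Hlo : 1 <= dot moduli (fun i => cabs (z i)) by rewrite -Hz2; exact: sum_le.
split; first by split; [exact: Hz1 | exact: Rle_antisym].
exact: sum_le_eq Hle (etrans Hz2 (Rle_antisym _ _ Hlo Hup)).
Qed.

(* If the face of |g| lies in the face of b, the face of g lies in the face
   of the rotated functional: z_i is a nonnegative multiple of phase g_i
   where g_i <> 0, and elsewhere b_i z_i = 0 by flipping coordinates. *)
Lemma cface_sub_rotated b : dominated N b -> (forall x, face N moduli x -> face N b x) ->
  forall z, cface N g z -> cface N (rotate b) z.
Proof.
move=> Hb Hsub z Hz; have [Hza Hcs] := cface_moduli Hz.
have Hzb := Hsub _ Hza.
split; first by case: Hz.
rewrite cdot_rotate_l -(proj2 Hzb); apply: eq_bigr => i _.
have [Hgi|Hgi] := Req_dec (moduli i) 0.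
  have [_ Hflip] := Hsub _ (face_flip HN Hgi Hza).
  rewrite dot_upd_r (proj2 Hzb) in Hflip.
  have Hbz : b i * cabs (z i) = 0 by lra.
  case: (Rmult_integral _ _ Hbz) => [->|/cabs0 ->]; first by ring.
  by rewrite cabs_c0 /cinner /c0 /=; ring.
by rewrite [in LHS](cinner_eq (Hcs i) Hgi) cinner_unit ?cabs_phase // /cofR /= cabs_abs.
Qed.

Lemma moduli_face_max : max_convex_in_sphere_C (cnorm N) (cface N g) ->
  max_convex_in_sphere_R N (face N moduli).
Proof.
move=> [_ [_ Cmax]].
have [Fc Fs] := face_convex HN (dominated_cabs HN g_dom).
split; first exact: Fs; split; first exact: Fc.
move=> F HF1 HF2 HF3.
have [b [Hb HFb]] := face_of_convex HN HF2 HF1.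
have [Cc Cs] := cface_convex HN (rotate_cdominated Hb).
have Hback := Cmax _ Cs Cc (cface_sub_rotated Hb (fun x Hx => HFb _ (HF3 _ Hx))).
move=> x Hx; have [Hx1 Hx2] := HFb _ Hx.
have Hrot : cface N (rotate b) (rotate x) by split; rewrite ?cnorm_rotate ?cdot_rotate_rotate.
by have [_ Hg] := Hback _ Hrot; split => //; rewrite -cdot_rotate.
Qed.

End RealToComplex.

(* The key step applies the CL property to the maximal
   face of a with its j-th sign flipped: a face point then splits into face
   points that either miss coordinate j or live on coordinate j alone. *)
Section Concentration.
Variable n : nat.
Variable N : rvec n -> R.
Hypothesis HN : is_absolute_norm N.
Variable a : rvec n.
Hypothesis a_dom : dominated N a.
Hypothesis a_ge0 : forall i, 0 <= a i.
Hypothesis a_max : max_convex_in_sphere_R N (face N a).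
Hypothesis HCL : is_CL_R N.

Definition flip_one (j : 'I_n) : rvec n := fun i => if i == j then -1 else 1.

Lemma flip_one_sign j : is_sign (flip_one j).
Proof. by move=> i; rewrite /flip_one; case: (i == j); [right | left]. Qed.

Lemma ball_in_flipped_face j x : N x <= 1 -> aco_R (face N (sflip (flip_one j) a)) x.
Proof.
move=> Hx; apply: (proj1 (HCL _ x)) Hx.
apply: max_ext (max_sflip HN (flip_one_sign j) a_max) => y.
by rewrite (face_sflip HN a y (flip_one_sign j)).
Qed.

Lemma dot_flip_one j y : dot a y = dot (sflip (flip_one j) a) y + 2 * a j * y j.
Proof.
rewrite {1}(_ : a = upd (sflip (flip_one j) a) j (a j)).
  by rewrite dot_upd /sflip /flip_one eqxx; ring.
by apply: funext_R => i; rewrite /upd /sflip /flip_one; case: eqP => [->|_]; ring.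
Qed.

Lemma dot_abs_le y : N y = 1 -> Rabs (dot a y) <= 1.
Proof.
move=> Hy; have := a_dom y; have := a_dom (fun i => -1 * y i).
rewrite dot_scale.
have -> : (fun i => -1 * y i) = (fun i => - y i) by apply: funext_R => i; ring.
by rewrite (N_opp HN) Hy; split_Rabs; lra.
Qed.

Lemma single_support u j : face N a u -> a j * u j = 1 -> forall i, i <> j -> a i * u i = 0.
Proof.
move=> Hu Hj i Hij.
have Hle : forall k, (if k == j then a j * u j else 0) <= a k * u k.
  by move=> k; case: eqP => [->|_]; [exact: Rle_refl | exact: (face_nonneg HN a_dom a_ge0 Hu k)].
have Hsum : \big[Rplus/0]_(k : 'I_n) (if k == j then a j * u j else 0) = dot a u.
  by rewrite (sum_D1 j) eqxx big1 => [|k /negbTE ->]; rewrite ?Hj ?(proj2 Hu); ring.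
by have := sum_le_eq Hle Hsum i; case: eqP => // _ <-.
Qed.

Definition one_sided (j : 'I_n) (y : rvec n) :=
  face N a y /\ (a j * y j = 0 \/ forall i, i <> j -> a i * y i = 0).

Lemma one_sided_term j lam y : face N (sflip (flip_one j) a) y ->
  lam * dot a y = Rabs lam ->
  lam = 0 \/ exists q, 0 < fst q /\ one_sided j (snd q) /\
    Rabs (fst q) <= Rabs lam /\ forall i, fst q * snd q i = lam * y i.
Proof.
move=> [Hy1 Hy2] Hterm; have Hflip := dot_flip_one j y; rewrite Hy2 in Hflip.
have [Hneg|[->|Hpos]] := Rtotal_order lam 0; [right | by left | right].
- rewrite Rabs_left // in Hterm.
  have Hdot : dot a y = -1 by apply: (Rmult_eq_reg_l lam); lra.
  pose u i := - y i.
  have Hu : face N a u.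
    split; first by rewrite (N_opp HN).
    rewrite (_ : u = fun i => -1 * y i) ?dot_scale ?Hdot; first ring.
    by apply: funext_R => i; rewrite /u; ring.
  have Huj : a j * u j = 1 by rewrite /u; lra.
  exists (- lam, u); split => /=; first lra.
  split; first by split => //; right; exact: single_support.
  by split; [rewrite Rabs_Ropp; exact: Rle_refl | move=> i; rewrite /u; ring].
- rewrite Rabs_pos_eq in Hterm; last lra.
  have Hdot : dot a y = 1 by apply: (Rmult_eq_reg_l lam); lra.
  exists (lam, y); split => //=; split; first by split; [split | left; lra].
  by split => //; exact: Rle_refl.
Qed.

Lemma one_sided_decomposition x j : face N a x ->
  exists l, (forall p, In p l -> 0 < fst p /\ one_sided j (snd p)) /\ asum l <= 1 /\
    forall i, rlincomb l i = x i.
Proof.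
move=> Hx.
have [l0 [H1 [H2 H3]]] := ball_in_flipped_face j (Req_le _ _ (proj1 Hx)).
change (asum l0 <= 1) in H2.
have Hbound : forall p, In p l0 -> Rabs (dot a (snd p)) <= 1.
  by move=> p /H1 [Hp _]; exact: dot_abs_le.
have Hsum : lsum l0 (dot a) = asum l0.
  have Hx2 : lsum l0 (dot a) = 1.
    by rewrite -dot_rlincomb -(proj2 Hx); congr dot; apply: funext_R => i; rewrite H3.
  by have := lsum_le_asum Hbound; lra.
have [l [L1 [L2 L3]]] := @aco_refine _ (one_sided j) l0 (fun p Hp =>
  one_sided_term (H1 p Hp) (lsum_eq_asum Hbound Hsum Hp)).
by exists l; split => //; split; [lra | move=> i; rewrite L3 H3].
Qed.

Definition sparse_on (L : list 'I_n) (t : rvec n) :=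
  face N a t /\ forall i k, In i L -> In k L -> i <> k -> a i * t i = 0 \/ a k * t k = 0.

(* Adding a coordinate j to L: one-sided points for j that refine y inherit
   the vanishing of a_m y_m, since all coefficients and terms are >= 0. *)
Lemma sparse_step L j y : sparse_on L y -> aco_R (sparse_on (j :: L)) y.
Proof.
move=> [Hy Hsp].
have [l [L1 [L2 L3]]] := one_sided_decomposition j Hy.
have Hinherit : forall m, a m * y m = 0 -> forall p, In p l -> a m * snd p m = 0.
  move=> m Hm; apply: (lsum_pos_zero (f := fun t => a m * t m)).
    by move=> p /L1 [Hp [Hface _]]; split => //; exact: (face_nonneg HN a_dom a_ge0 Hface m).
  rewrite -{}Hm -L3 rlincomb_coord /lsum.
  by elim: l {L1 L2 L3} => [|p l IH] /=; rewrite ?IH; ring.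
exists l; split; last by split => // i; rewrite L3.
move=> p Hp; have [_ [Hface Hside]] := L1 p Hp; split => // i k Hi Hk Hik.
have InL : forall m, In m (j :: L) -> m <> j -> In m L by move=> m [->|].
have [Hij|Hij] := classic (i = j).
  subst i; case: Hside => [Hj|Hone]; first by left.
  by right; apply: Hone => Hkj; apply: Hik; rewrite Hkj.
have [Hkj|Hkj] := classic (k = j).
  subst k; case: Hside => [Hj|Hone]; first by right.
  by left; apply: Hone.
by case: (Hsp i k (InL i Hi Hij) (InL k Hk Hkj) Hik) => H0; [left | right]; exact: Hinherit H0 p Hp.
Qed.

Definition concentrated (t : rvec n) :=
  face N a t /\ forall i k, i <> k -> a i * t i = 0 \/ a k * t k = 0.

Lemma face_in_aco_concentrated x : face N a x -> aco_R concentrated x.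
Proof.
move=> Hx.
have Hall : forall L, aco_R (sparse_on L) x.
  elim=> [|j L IH]; first by apply: aco_self; split => // i k [].
  by apply: aco_trans; apply: aco_mono IH => y; exact: sparse_step.
apply: aco_mono (Hall (enum 'I_n)) => t [Ht Hsp]; split => // i k; apply: Hsp;
  exact/In_mem/mem_enum.
Qed.

Lemma ball_in_aco_concentrated x : N x <= 1 -> aco_R concentrated x.
Proof.
move=> Hx; apply: aco_trans; apply: aco_mono face_in_aco_concentrated _.
exact: (proj1 (HCL a_max x) Hx).
Qed.

End Concentration.

(* If X is CL and g exposes a maximal face
   of the complex ball, every z in the ball is phase(z) |z| with |z| an
   absolutely convex combination of concentrated points for |g|; each such
   term, rotated coordinatewise by phase(z), is a complex multiple of a point
   of the face of g. *)
Section ComplexRepresentation.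
Variable n : nat.
Variable N : rvec n -> R.
Hypothesis HN : is_absolute_norm N.
Variable g : cvec n.
Hypothesis g_dom : cdominated N g.

(* c phi t, for a concentrated t and unit phases phi, is mu z with |mu| = |c|
   and z in the face of g: if t meets |g| in coordinate s only, rotate t so
   that its s-th coordinate has the phase of g_s. *)
Lemma rotate_into_cface (phi : cvec n) c t : (forall i, cabs (phi i) = 1) ->
  concentrated N (moduli g) t ->
  exists mu z, cface N g z /\ cabs mu = Rabs c /\
    forall i, cmul mu (z i) = cmul (phi i) (cofR (c * t i)).
Proof.
move=> Hphi [[Ht1 Ht2] Hconc].
have [s Hs] : exists s, moduli g s * t s <> 0.
  apply: NNPP => Hnone; apply: R1_neq_R0; rewrite -Ht2.
  by apply: big1 => i _; apply: NNPP => Hi; apply: Hnone; exists i.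
have Hother : forall i, i <> s -> moduli g i * t i = 0 by move=> i His; case: (Hconc i s His).
set psi := cmul (cconj (phi s)) (phase (g s)).
have Hpsi : cabs psi = 1 by rewrite /psi cabs_mul cabs_conj Hphi cabs_phase; ring.
have Hphs : cmul (phi s) psi = phase (g s).
  rewrite /psi -[RHS]cmul1 -(cconj_unit (Hphi s)).
  by apply: cpair_eq; rewrite /cmul /cconj /=; ring.
clearbody psi.
pose z i := cmul (cmul (phi i) psi) (cofR (t i)).
exists (cmul (cofR c) (cconj psi)), z; split; last split.
- split.
    rewrite -Ht1 (N_abs HN t) /cnorm; apply: N_ext => i.
    by rewrite /z !cabs_mul Hphi Hpsi cabs_cofR /rvabs; ring.
  have Hzs : z s = cmul (phase (g s)) (cofR (t s)) by rewrite /z Hphs.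
  rewrite -Ht2 /cdot (sum_D1 s) [X in _ = X](sum_D1 s) Hzs cinner_phase /cofR /=.
  congr (_ + _); apply: eq_bigr => i /eqP His.
  rewrite (Hother i His); case: (Rmult_integral _ _ (Hother i His)) => [/cabs0 ->|Hti].
    by rewrite /cinner /c0 /=; ring.
  by rewrite /z Hti /cinner /cmul /cofR /=; ring.
- by rewrite cabs_mul cabs_conj Hpsi cabs_cofR Rmult_1_r.
- move=> i; rewrite /z -[RHS]cmul1 -(cconj_unit Hpsi).
  by apply: cpair_eq; rewrite /cmul /cconj /cofR /=; ring.
Qed.

Lemma complex_combination (phi : cvec n) (l : list (R * rvec n)) :
  (forall i, cabs (phi i) = 1) -> (forall p, In p l -> concentrated N (moduli g) (snd p)) ->
  exists lc, (forall p, In p lc -> cface N g (snd p)) /\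
    fold_right (fun p s => cabs (fst p) + s) 0 lc <= asum l /\
    forall i, clincomb lc i = cmul (phi i) (cofR (rlincomb l i)).
Proof.
move=> Hphi; elim: l => [|[c t] l IH] H.
  exists nil; split => //; split; first by rewrite /=; lra.
  by move=> i; apply: cpair_eq; rewrite /= /cmul /cofR /c0 /rvzero /=; ring.
have [lc [H1 [H2 H3]]] := IH (fun p Hp => H p (or_intror Hp)).
have [mu [z [Hz [Hmu Hmz]]]] := rotate_into_cface c Hphi (H (c, t) (or_introl erefl)).
exists ((mu, z) :: lc); split; first by move=> p [<-|]; [exact: Hz | exact: H1].
split; first by rewrite /= Hmu; lra.
move=> i; change (cadd (cmul mu (z i)) (clincomb lc i) = cmul (phi i) (cofR (c * t i + rlincomb l i))).
rewrite Hmz H3.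
by apply: cpair_eq; rewrite /cadd /cmul /cofR /=; ring.
Qed.

Lemma complex_ball_in_aco : max_convex_in_sphere_R N (face N (moduli g)) -> is_CL_R N ->
  forall w, cnorm N w <= 1 -> aco_C (cface N g) w.
Proof.
move=> Hmax HCL w Hw.
have [l [L1 [L2 L3]]] :=
  ball_in_aco_concentrated HN (dominated_cabs HN g_dom) (@moduli_ge0 _ g) Hmax HCL Hw.
have [lc [C1 [C2 C3]]] := complex_combination (fun i => cabs_phase (w i)) L1.
exists lc; split => //; split; first by change (asum l <= 1) in L2; lra.
by move=> i; rewrite C3 -L3; exact: phase_decomp.
Qed.

End ComplexRepresentation.

Lemma CL_real_to_complex n (N : rvec n -> R) : is_absolute_norm N ->
  is_CL_R N -> is_CL_C (cnorm N).
Proof.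
move=> HN HR G HG z; split; last by apply: caco_ball => //; case: HG.
move=> Hz.
have [g [Hg HGg]] := max_cface HN HG.
have HGmax : max_convex_in_sphere_C (cnorm N) (cface N g).
  case: HG => [H1 [H2 H3]]; split; first by move=> w /HGg; exact: H1.
  split; first by move=> x y t /HGg Hx /HGg Hy Ht; apply/HGg; exact: H2.
  by move=> F HF1 HF2 HF3 x Hx; apply/HGg; apply: (H3 F) => // y /HGg; exact: HF3.
have [l [H1 H2]] := complex_ball_in_aco HN Hg (moduli_face_max HN Hg HGmax) HR Hz.
by exists l; split => // p /H1 /HGg.
Qed.

Theorem proposition4p3 (n : nat) (N : rvec n -> R) (HN : is_absolute_norm N) :
  (forall x : rvec n, is_extreme_R N x <-> is_extreme_C (cnorm N) (embed x)) /\
  (is_CL_R N <-> is_CL_C (cnorm N)).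
Proof.
split; first exact: extreme_complexification.
by split; [exact: CL_real_to_complex | exact: CL_complex_to_real].
Qed.
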